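(* Let $\Gamma$ be a finite abelian group of order $n \ge 3$ and let $G = \mathrm{Cay}(\Gamma, S)$ be a Cayley graph on $\Gamma$. Then $\frac{\lambda_3(G)}{n} \le \frac13$.
   Context: For a group $\Gamma$ with identity $e$ and a subset $S \subseteq \Gamma$ with $e \notin S$ and $S = S^{-1}$, the Cayley graph $\mathrm{Cay}(\Gamma,S)$ has vertex set $\Gamma$, with $s_1 \sim s_2$ if and only if $s_1 s_2^{-1} \in S$. $\lambda_3$ denotes the third largest eigenvalue (with multiplicity) of the adjacency matrix. *)

From mathcomp Require Import all_boot all_order all_algebra all_fingroup.
Set Implicit Arguments. Unset Strict Implicit. Unset Printing Implicit Defensive.
Import Order.TTheory GRing.Theory Num.Theory.
Local Open Scope ring_scope.

Definition cayley_adj (R : nzRingType) (gT : finGroupType) (S : {set gT})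
  : 'M[R]_#|gT| :=
  \matrix_(i, j) (((enum_val i : gT) * (enum_val j : gT)^-1)%g \in S)%:R.

Definition eigenvalues_desc (R : rcfType) (m : nat) (A : 'M[R]_m) (s : seq R) :=
  char_poly A = \prod_(x <- s) ('X - x%:P) /\ sorted (>=%R) s.

From mathcomp Require Import all_boot all_order all_algebra all_fingroup.
From mathcomp Require Import cyclic separable cyclotomic complex ring lra.
Set Implicit Arguments. Unset Strict Implicit. Unset Printing Implicit Defensive.
Import Order.TTheory GRing.Theory Num.Theory.
Local Open Scope ring_scope.

(* The translation matrices of an abelian group commute and have
   finite order, so over R[i] they are simultaneously diagonalizable; the
   diagonal entries are n pairwise distinct characters χ of Γ, and the
   eigenvalues of Cay(Γ, S) = Σ_(s ∈ S) T_s are the sums λ_χ = Σ_(s ∈ S) χ(s).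
   It suffices that at most two of them exceed n/3: the trivial character and
   at most one other.  If χ² is nontrivial, compare Re χ(s) = cos θ_s with
   F(θ) = 1/3 + cos θ/2 + 7/36 cos 2θ - 1/36 cos 4θ ≥ max(0, cos θ):
   summing over Γ, where χ and χ² sum to 0 and χ⁴ sums to 0 or n, gives
   Re λ_χ ≤ n/3.  Two distinct nontrivial ±1-valued characters satisfy
   χ + ψ ≤ (1 + χ)(1 + ψ)/2 pointwise, and the right-hand side sums to n/2
   over Γ, so λ_χ and λ_ψ cannot both exceed n/3. *)

Lemma card_finGroup_gt0 (gT : finGroupType) : (0 < #|gT|)%N.
Proof. by rewrite -cardsT cardG_gt0. Qed.

Section TranslationMatrix.
Variables (R : nzRingType) (gT : finGroupType).

Definition transl_mx (g : gT) : 'M[R]_#|gT| :=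
  \matrix_(i, j) ((enum_val i * (enum_val j)^-1)%g == g)%:R.

Lemma transl_mxM g h : transl_mx g *m transl_mx h = transl_mx (g * h).
Proof.
apply/matrixP => i k; rewrite !mxE (bigD1 (enum_rank (g^-1 * enum_val i)%g)) //=.
rewrite big1 ?addr0 => [|j /eqP nji]; rewrite !mxE.
  rewrite enum_rankK invMg invgK mulgA mulgV mul1g eqxx mul1r -mulgA.
  by rewrite (canF_eq (mulKVg g)).
case: eqP => [gij|]; last by rewrite mul0r.
by case: nji; apply: enum_val_inj; rewrite enum_rankK -gij invMg invgK mulgKV.
Qed.

Lemma transl_mx1 : transl_mx 1 = 1%:M.
Proof.
by apply/matrixP => i j; rewrite !mxE -eq_mulgV1 (inj_eq enum_val_inj).
Qed.

Lemma transl_mxX g k : transl_mx g ^+ k = transl_mx (g ^+ k).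
Proof.
elim: k => [|k IHk]; first by rewrite expr0 expg0 transl_mx1.
by rewrite exprS IHk -mulmxE transl_mxM expgS.
Qed.

Lemma mxtrace_transl_mx g : \tr (transl_mx g) = (g == 1%g)%:R *+ #|gT|.
Proof.
rewrite /mxtrace (eq_bigr (fun _ => (g == 1%g)%:R)) ?sumr_const ?card_ord //.
by move=> i _; rewrite mxE mulgV eq_sym.
Qed.

Lemma cayley_adj_sum_transl (S : {set gT}) :
  cayley_adj R S = \sum_(s in S) transl_mx s.
Proof.
apply/matrixP => i j; rewrite !mxE summxE.
under eq_bigr do rewrite mxE; move: (enum_val i * _)%g => x.
have [xS | xNS] := boolP (x \in S).
  rewrite (bigD1 x) //= eqxx big1 ?addr0 // => s /andP[_ /negbTE].
  by rewrite eq_sym => ->.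
by rewrite big1 // => s sS; case: eqP => // xs; rewrite xs sS in xNS.
Qed.

End TranslationMatrix.

Lemma map_cayley_adj (R R' : nzRingType) (f : {rmorphism R -> R'})
    (gT : finGroupType) (S : {set gT}) :
  map_mx f (cayley_adj R S) = cayley_adj R' S.
Proof. by apply/matrixP => i j; rewrite !mxE rmorph_nat. Qed.

Lemma exp_eq1_diagonalizable (F : numClosedFieldType) n (M : 'M[F]_n) k :
  (0 < k)%N -> M ^+ k = 1 -> diagonalizable M.
Proof.
case: n M => [|n] M k_gt0 Mk.
  by exists 1%:M; rewrite ?unitmx1 //; apply/is_diag_mxP => -[].
apply/diagonalizableP.
have [rs Xk1] := closed_field_poly_normal ('X^k - 1 : {poly F}).
rewrite (monicP (monicXnsubC 1 k_gt0)) scale1r in Xk1.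
exists rs.
  by rewrite -separable_prod_XsubC -Xk1 separable_Xn_sub_1 // pnatr_eq0 -lt0n.
rewrite -Xk1; apply: mxminpoly_min.
by rewrite rmorphB /= rmorphXn /= horner_mx_X rmorph1 Mk subrr.
Qed.

Lemma transl_codiagonalizable (F : numClosedFieldType) (gT : finGroupType) :
  abelian [set: gT] ->
  exists2 P : 'M[F]_#|gT|, P \in unitmx &
    forall g, is_diag_mx (P *m transl_mx F g *m invmx P).
Proof.
move=> abelG.
have [P Pu /allP diagP] : codiagonalizable [seq transl_mx F g | g <- enum gT].
  apply/codiagonalizableP; split=> [_ _ /mapP[g _ ->] /mapP[h _ ->] | _ /mapP[g _ ->]].
    by rewrite /comm_mx !transl_mxM (centsP abelG g (in_setT g) h (in_setT h)).
  apply: (@exp_eq1_diagonalizable _ _ _ #|gT|); first exact: card_finGroup_gt0.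
  by rewrite transl_mxX -[in (g ^+ _)%g]cardsT expg_cardG ?inE // transl_mx1.
exists P => // g; have := diagP _ (map_f (@transl_mx F gT) (mem_enum _ g)).
by rewrite /= /similar_to conjumx.
Qed.

Lemma char_poly_conj (F : fieldType) n (P A : 'M[F]_n) :
  P \in unitmx -> char_poly (P *m A *m invmx P) = char_poly A.
Proof.
move=> Pu; rewrite /char_poly /char_poly_mx.
set P' := map_mx polyC P; set V' := map_mx polyC (invmx P).
have P'V' : P' *m V' = 1%:M by rewrite -map_mxM mulmxV // map_mx1.
have V'P' : V' *m P' = 1%:M by rewrite -map_mxM mulVmx // map_mx1.
have -> : 'X%:M - map_mx polyC (P *m A *m invmx P)
        = P' *m ('X%:M - map_mx polyC A) *m V'.
  rewrite mulmxBr mulmxBl; congr (_ - _); last by rewrite !map_mxM.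
  by rewrite scalar_mxC -mulmxA P'V' mulmx1.
by rewrite !det_mulmx mulrC mulrA -det_mulmx V'P' det1 mul1r.
Qed.

Section MorphismSums.
Variables (F : numDomainType) (gT : finGroupType) (phi : gT -> F).
Hypothesis phiM : {morph phi : g h / (g * h)%g >-> g * h}.

Lemma sum_morph_eq0 h : phi h != 1 -> \sum_g phi g = 0.
Proof.
move=> phih1.
have sum_invariant : \sum_g phi g = phi h * \sum_g phi g.
  rewrite mulr_sumr (reindex_inj (mulgI h)) /=.
  by apply: eq_bigr => g _; rewrite phiM.
have : (1 - phi h) * \sum_g phi g = 0 by rewrite mulrBl mul1r -sum_invariant subrr.
by move/eqP; rewrite mulf_eq0 subr_eq0 eq_sym (negbTE phih1) => /eqP.
Qed.

Lemma sum_morph_ge0 : 0 <= \sum_g phi g.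
Proof.
have [/forallP phi1 | /forallPn[h phih1]] := boolP [forall g, phi g == 1].
  by rewrite (eq_bigr (fun=> 1)) ?sumr_const ?ler0n // => g _; apply/eqP.
by rewrite (sum_morph_eq0 phih1).
Qed.

End MorphismSums.

Lemma ler_sum_in (F : numDomainType) (I : finType) (A : {pred I}) (f : I -> F) :
  (forall i, 0 <= f i) -> \sum_(i in A) f i <= \sum_i f i.
Proof.
move=> f_ge0; rewrite [leRHS](bigID (mem A)) /= lerDl.
by apply: sumr_ge0 => i _.
Qed.

Section DiagonalCharacters.
Variables (C : numClosedFieldType) (gT : finGroupType) (P : 'M[C]_#|gT|).
Hypothesis Pu : P \in unitmx.
Hypothesis Pdiag : forall g, is_diag_mx (P *m transl_mx C g *m invmx P).

(* [P] diagonalizes every translation, so each row of [P] is a common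
   eigenvector and [diag_char i] is the character by which Γ acts on row i. *)
Definition diag_char i g := (P *m transl_mx C g *m invmx P) i i.

Lemma diag_charM i : {morph diag_char i : g h / (g * h)%g >-> g * h}.
Proof.
move=> g h; rewrite /diag_char.
have -> : P *m transl_mx C (g * h) *m invmx P
        = (P *m transl_mx C g *m invmx P) *m (P *m transl_mx C h *m invmx P).
  by rewrite !mulmxA mulmxKV // -transl_mxM mulmxA.
rewrite mxE (bigD1 i) //= big1 ?addr0 // => j ji.
by rewrite (is_diag_mxP (Pdiag g)) ?mul0r // eq_sym.
Qed.

Lemma diag_char1 i : diag_char i 1 = 1.
Proof. by rewrite /diag_char transl_mx1 mulmx1 mulmxV // mxE eqxx. Qed.

Lemma sum_diag_char g : \sum_i diag_char i g = (g == 1%g)%:R *+ #|gT|.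
Proof.
rewrite -(mxtrace_transl_mx C) -[transl_mx C g]mul1mx -(mulVmx Pu) -mulmxA.
by rewrite mxtrace_mulC.
Qed.

Lemma norm_diag_char i g : `|diag_char i g| = 1.
Proof.
have chiX k : diag_char i (g ^+ k) = diag_char i g ^+ k.
  by elim: k => [|k IHk]; rewrite ?expg0 ?diag_char1 // expgS diag_charM IHk exprS.
apply/eqP; rewrite -(pexpr_eq1 (card_finGroup_gt0 gT)) // -normrX -chiX.
by rewrite -[in (g ^+ _)%g]cardsT expg_cardG ?inE // diag_char1 normr1.
Qed.

Lemma diag_char_inj i j : diag_char i =1 diag_char j -> i = j.
Proof.
move=> chi_ij; apply/eqP; apply: contraT => nij.
(* Orthogonality: each [orth k] is nonnegative, equals [n] when χ_k = χ_i, and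
   the [orth k] sum to [n]; so χ_i cannot occur at two indices. *)
pose orth k := \sum_g diag_char k g * diag_char i g^-1.
have orth_ge0 k : 0 <= orth k.
  apply: sum_morph_ge0 => g h /=.
  by rewrite invMg !diag_charM; ring.
have orth_eq k : diag_char k =1 diag_char i -> orth k = #|gT|%:R.
  move=> chi_ki; rewrite /orth (eq_bigr (fun=> 1)) ?sumr_const // => g _.
  by rewrite chi_ki -diag_charM mulgV diag_char1.
have sum_orth : \sum_k orth k = #|gT|%:R.
  rewrite exchange_big /=; under eq_bigr do rewrite -mulr_suml sum_diag_char.
  rewrite (bigD1 1%g) //= big1 ?addr0 => [|g /negbTE->]; last by rewrite mul0rn mul0r.
  by rewrite eqxx invg1 diag_char1 mulr1.
have : #|gT|%:R + #|gT|%:R <= #|gT|%:R :> C.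
  rewrite -[leRHS]sum_orth (bigD1 i) // (bigD1 j) 1?eq_sym //=.
  rewrite !orth_eq // addrA lerDl sumr_ge0 // => k _.
by rewrite -natrD ler_nat -[leqRHS]add0n leq_add2r leqNgt card_finGroup_gt0.
Qed.

Lemma char_poly_sum_transl (S : {set gT}) :
  char_poly (\sum_(s in S) transl_mx C s)
  = \prod_i ('X - (\sum_(s in S) diag_char i s)%:P).
Proof.
rewrite -(char_poly_conj _ Pu) mulmx_sumr mulmx_suml char_poly_trig.
  by apply: eq_bigr => i _; rewrite summxE.
apply/is_diag_mx_is_trig/is_diag_mxP => i j ij; rewrite summxE big1 // => g _.
exact: (is_diag_mxP (Pdiag g)).
Qed.

End DiagonalCharacters.

Local Notation Re := (@complex.Re _).
Local Notation Im := (@complex.Im _).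

Section UnitaryCharacterSums.
Variables (R : rcfType) (gT : finGroupType) (S : {set gT}).
Implicit Types z : R[i].

Lemma Re_unit_bound z : `|z| = 1 -> -1 <= Re z <= 1.
Proof.
by move=> z1; rewrite -ler_norml -lecR (le_trans (normc_ge_Re z)) ?z1.
Qed.

Lemma Re_sqr_unit z : `|z| = 1 -> Re (z ^+ 2) = 2 * Re z ^+ 2 - 1.
Proof.
move=> z1; have /complexI Re2_Im2 : ((Re z ^+ 2 + Im z ^+ 2)%:C = 1%:C)%C.
  by rewrite add_Re2_Im2 z1 expr1n.
by case: z {z1} Re2_Im2 => a b /= ab1; rewrite expr2 /=; lra.
Qed.

(* F(θ) at z = e^(iθ); it factors as (2/9)(cos θ + 1/2)²(1 + cos θ)(2 - cos θ). *)
Definition cos_majorant z : R :=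
  1/3 + Re z / 2 + 7/36 * Re (z ^+ 2) - 1/36 * Re (z ^+ 4).

Lemma cos_majorant_ge z : `|z| = 1 -> 0 <= cos_majorant z /\ Re z <= cos_majorant z.
Proof.
move=> z1; have /andP[Re_ge Re_le] := Re_unit_bound z1.
have z2_1 : `|z ^+ 2| = 1 by rewrite normrX z1 expr1n.
rewrite /cos_majorant -[z ^+ 4]/(z ^+ (2 * 2)) exprM.
rewrite (Re_sqr_unit z2_1) (Re_sqr_unit z1); set a := Re z.
have majorant_factor :
    1/3 + a/2 + 7/36 * (2 * a^+2 - 1) - 1/36 * (2 * (2 * a^+2 - 1)^+2 - 1)
    = 2/9 * (a + 1/2)^+2 * ((1 + a) * (2 - a)) by field.
have majorant_sub_factor :
    1/3 + a/2 + 7/36 * (2 * a^+2 - 1) - 1/36 * (2 * (2 * a^+2 - 1)^+2 - 1)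
    = a + 2/9 * (a - 1/2)^+2 * ((1 - a) * (a + 2)) by field.
split; [rewrite majorant_factor | rewrite majorant_sub_factor lerDl];
  by apply: mulr_ge0; [apply: mulr_ge0; [lra | exact: sqr_ge0] | apply: mulr_ge0; lra].
Qed.

Lemma sum_cos_majorant (phi : gT -> R[i]) :
  \sum_g cos_majorant (phi g) = #|gT|%:R / 3 + Re (\sum_g phi g) / 2
    + 7/36 * Re (\sum_g phi g ^+ 2) - 1/36 * Re (\sum_g phi g ^+ 4).
Proof.
rewrite !raddf_sum sumrB !big_split /= sumr_const -mulr_suml -!mulr_sumr.
by rewrite -[1/3 *+ _]mulr_natl !mul1r.
Qed.

Lemma sum_Re_char_le_third (phi : gT -> R[i]) h :
  {morph phi : g g' / (g * g')%g >-> g * g'} -> (forall g, `|phi g| = 1) ->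
  phi h ^+ 2 != 1 -> \sum_(s in S) Re (phi s) <= #|gT|%:R / 3.
Proof.
move=> phiM phi_unit phih2.
have phiXM k : {morph (fun g => phi g ^+ k) : g g' / (g * g')%g >-> g * g'}.
  by move=> g g' /=; rewrite phiM exprMn.
have sum1 : \sum_g phi g = 0.
  by apply: (sum_morph_eq0 phiM (h := h)); apply: contra phih2 => /eqP->; rewrite expr1n.
have sum2 : \sum_g phi g ^+ 2 = 0 by apply: (sum_morph_eq0 (phiXM 2%N) phih2).
have sum4 : 0 <= Re (\sum_g phi g ^+ 4).
  by move: (sum_morph_ge0 (phiXM 4%N)); rewrite lecE => /andP[].
apply: (@le_trans _ _ (\sum_(s in S) cos_majorant (phi s))).
  by apply: ler_sum => s _; case: (cos_majorant_ge (phi_unit s)).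
apply: le_trans (ler_sum_in _ _) _ => [g|]; first by case: (cos_majorant_ge (phi_unit g)).
by rewrite sum_cos_majorant sum1 sum2 raddf0; lra.
Qed.

End UnitaryCharacterSums.

Lemma sum_sign_chars_le_half (F : realFieldType) (gT : finGroupType) (S : {set gT})
    (a b : gT -> F) h1 h2 h3 :
  {morph a : g g' / (g * g')%g >-> g * g'} -> {morph b : g g' / (g * g')%g >-> g * g'} ->
  (forall g, a g ^+ 2 = 1) -> (forall g, b g ^+ 2 = 1) ->
  a h1 != 1 -> b h2 != 1 -> a h3 != b h3 ->
  \sum_(s in S) a s + \sum_(s in S) b s <= #|gT|%:R / 2.
Proof.
move=> aM bM a2 b2 ah1 bh2 abh3.
pose c g := (1 + a g) * (1 + b g) / 2.
have c_ge g : 0 <= c g /\ a g + b g <= c g.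
  move: (a2 g) (b2 g); rewrite /c => /eqP + /eqP; rewrite !sqrf_eq1.
  by case/orP=> /eqP-> /orP[]/eqP->; split; lra.
have abM : {morph (fun g => a g * b g) : g g' / (g * g')%g >-> g * g'}.
  by move=> g g' /=; rewrite aM bM mulrACA.
have sum_ab : \sum_g a g * b g = 0.
  apply: (sum_morph_eq0 abM (h := h3)); apply: contra abh3 => /eqP ab1.
  by rewrite -[a h3]mulr1 -(b2 h3) expr2 mulrA ab1 mul1r.
have sum_c : \sum_g c g = (#|gT|%:R + \sum_g a g + \sum_g b g + \sum_g a g * b g) / 2.
  rewrite /c -mulr_suml; congr (_ / 2); rewrite -sumr_const -!big_split /=.
  by apply: eq_bigr => g _; ring.
rewrite -big_split /=; apply: (@le_trans _ _ (\sum_(s in S) c s)).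
  by apply: ler_sum => s _; case: (c_ge s).
apply: le_trans (ler_sum_in _ _) _ => [g|]; first by case: (c_ge g).
by rewrite sum_c sum_ab (sum_morph_eq0 aM ah1) (sum_morph_eq0 bM bh2) !addr0.
Qed.

Section LargeCharacters.
Variables (R : rcfType) (gT : finGroupType) (S : {set gT}).

Lemma sqr_eq1_real (z : R[i]) : z ^+ 2 = 1 -> z = (Re z)%:C%C.
Proof.
move/eqP; rewrite sqrf_eq1 => z_pm1; rewrite RRe_real //.
by case/orP: z_pm1 => /eqP->; rewrite ?rpredN real1.
Qed.

Lemma sqr_eq1_Re (z : R[i]) : z ^+ 2 = 1 -> Re z ^+ 2 = 1.
Proof.
by move/eqP; rewrite sqrf_eq1 => /orP[]/eqP->; rewrite /= ?sqrrN expr1n.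
Qed.

Lemma sqr_eq1_Re_neq (z w : R[i]) : z ^+ 2 = 1 -> w ^+ 2 = 1 -> z != w -> Re z != Re w.
Proof.
move=> z2 w2; apply: contra => /eqP eq_Re.
by rewrite [z]sqr_eq1_real // [w]sqr_eq1_real // eq_Re.
Qed.

Lemma Re_sign_char_morph (chi : gT -> R[i]) :
  {morph chi : g g' / (g * g')%g >-> g * g'} -> (forall g, chi g ^+ 2 = 1) ->
  {morph (fun g => Re (chi g)) : g g' / (g * g')%g >-> g * g'}.
Proof.
move=> chiM chi_sign g g' /=.
by rewrite chiM [chi g]sqr_eq1_real // [chi g']sqr_eq1_real // -rmorphM.
Qed.

Lemma large_char_sqr_eq1 (chi : gT -> R[i]) :
  {morph chi : g g' / (g * g')%g >-> g * g'} -> (forall g, `|chi g| = 1) ->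
  #|gT|%:R / 3 < \sum_(s in S) Re (chi s) -> forall g, chi g ^+ 2 = 1.
Proof.
move=> chiM chi_unit chi_large g; apply/eqP; apply: contraTT chi_large => chig.
by rewrite -leNgt (sum_Re_char_le_third S chiM chi_unit chig).
Qed.

Lemma large_chars_eq (phi psi : gT -> R[i]) h1 h2 :
  {morph phi : g g' / (g * g')%g >-> g * g'} ->
  {morph psi : g g' / (g * g')%g >-> g * g'} ->
  (forall g, `|phi g| = 1) -> (forall g, `|psi g| = 1) ->
  phi h1 != 1 -> psi h2 != 1 ->
  #|gT|%:R / 3 < \sum_(s in S) Re (phi s) ->
  #|gT|%:R / 3 < \sum_(s in S) Re (psi s) ->
  phi =1 psi.
Proof.
move=> phiM psiM phi_unit psi_unit phih1 psih2 phi_large psi_large g.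
have phi_sign := large_char_sqr_eq1 phiM phi_unit phi_large.
have psi_sign := large_char_sqr_eq1 psiM psi_unit psi_large.
apply/eqP; apply: contraT => phi_psi_g.
have := sum_sign_chars_le_half S
  (Re_sign_char_morph phiM phi_sign) (Re_sign_char_morph psiM psi_sign)
  (fun g => sqr_eq1_Re (phi_sign g)) (fun g => sqr_eq1_Re (psi_sign g))
  (sqr_eq1_Re_neq (phi_sign h1) (expr1n _ 2) phih1)
  (sqr_eq1_Re_neq (psi_sign h2) (expr1n _ 2) psih2)
  (sqr_eq1_Re_neq (phi_sign g) (psi_sign g) phi_psi_g).
by have := ler0n R #|gT|; lra.
Qed.

Lemma card_large_diag_chars (P : 'M[R[i]]_#|gT|) :
  P \in unitmx -> (forall g, is_diag_mx (P *m transl_mx R[i] g *m invmx P)) ->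
  (#|[set i | (#|gT|%:R / 3 < Re (\sum_(s in S) diag_char P i s))%R]| <= 2)%N.
Proof.
move=> Pu Pdiag; set A := [set i | _].
have chi_inj := diag_char_inj Pu Pdiag.
pose T := [set i | [forall g, diag_char P i g == 1]].
have trivial_le1 : (#|A :&: T| <= 1)%N.
  apply/card_le1_eqP => i j; rewrite !inE.
  move=> /andP[_ /forallP chi_i1] /andP[_ /forallP chi_j1].
  by apply: chi_inj => g; rewrite (eqP (chi_i1 g)) (eqP (chi_j1 g)).
have nontrivial_le1 : (#|A :\: T| <= 1)%N.
  apply/card_le1_eqP => i j; rewrite !inE !raddf_sum.
  move=> /andP[/forallPn[h1 chih1] large_i] /andP[/forallPn[h2 chih2] large_j].
  apply: chi_inj; apply: (large_chars_eq (diag_charM Pu Pdiag j) (diag_charM Pu Pdiag i)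
    (norm_diag_char Pu Pdiag j) (norm_diag_char Pu Pdiag i) chih2 chih1 large_j large_i).
by rewrite -(cardsID T A); exact: leq_add trivial_le1 nontrivial_le1.
Qed.

End LargeCharacters.

Lemma sorted_count_gt (F : numDomainType) (s : seq F) x k :
  sorted >=%R s -> (k < size s)%N -> x < s`_k ->
  (k < count (fun y => (x < y)%R) s)%N.
Proof.
elim: s k => // a t IHt [|k] /= a_t; first by move=> _ ->.
rewrite ltnS => k_lt x_lt.
have t_le_a : t`_k <= a by apply: (allP (order_path_min ge_trans a_t)); rewrite mem_nth.
by rewrite (lt_le_trans x_lt t_le_a) ltnS IHt // (path_sorted a_t).
Qed.

Lemma count_large_cayley_eigenvalues (R : rcfType) (gT : finGroupType)
    (S : {set gT}) (s : seq R) :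
  abelian [set: gT] -> char_poly (cayley_adj R S) = \prod_(x <- s) ('X - x%:P) ->
  (count (fun x => (#|gT|%:R / 3 < x)%R) s <= 2)%N.
Proof.
move=> abelG adj_char; have [P Pu Pdiag] := transl_codiagonalizable R[i] abelG.
have s_eig : perm_eq [seq x%:C%C | x <- s]
    [seq \sum_(s in S) diag_char P i s | i <- index_enum 'I_#|gT|].
  apply: prod_XsubC_eq; rewrite big_map -map_prod_XsubC -adj_char map_char_poly.
  by rewrite map_cayley_adj cayley_adj_sum_transl (char_poly_sum_transl Pu Pdiag) big_map.
have -> : count (fun x => #|gT|%:R / 3 < x) s
        = count (fun z => (#|gT|%:R / 3)%:C%C < z) [seq x%:C%C | x <- s].
  by rewrite count_map; apply: eq_count => x /=; rewrite ltcR.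
rewrite (seq.permP s_eig) count_map -sum1_count sum1dep_card.
apply: leq_trans (card_large_diag_chars S Pu Pdiag).
by apply/subset_leq_card/subsetP => i; rewrite !inE ltcE => /andP[].
Qed.

Unset Implicit Arguments.
Theorem theorem3p5 (R : rcfType) (gT : finGroupType) (S : {set gT})
  (s : seq R) :
  abelian [set: gT] -> (3 <= #|gT|)%N ->
  (1%g \notin S) -> (S^-1)%g = S ->
  eigenvalues_desc (cayley_adj R S) s ->
  s`_2 / #|gT|%:R <= 1 / 3.
Proof.
move=> abelG n_ge3 _ _ [adj_char s_sorted].
have size_s : size s = #|gT|.
  by have := size_char_poly (cayley_adj R S); rewrite adj_char size_prod_XsubC => -[].
rewrite ler_pdivrMr ?ltr0n ?card_finGroup_gt0 // mul1r mulrC leNgt.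
apply/negP => s2_large.
have := sorted_count_gt s_sorted _ s2_large; rewrite size_s => /(_ n_ge3).
by rewrite ltnNge (count_large_cayley_eigenvalues abelG adj_char).
Qed.
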